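(* Let $\hat\gamma,\lambda,\Gamma,a,b,\tau,\mu_f>0$ with $a>b$, $a+b<1$, $2a+3b<2$, $\Gamma\ge1$ and $\Gamma\ge\big(\frac{4}{\hat\gamma\lambda\mu_f\tau}\big)^{1/(1-a-b)}$. Define $\hat\gamma_k=\hat\gamma/(k+\Gamma)^a$, $\lambda_k=\lambda/(k+\Gamma)^b$ and $\Lambda_k=|1-\lambda_{k+1}/\lambda_k|$ for $k\ge0$. Suppose moreover that there are numbers $\gamma_{i,k}\ge0$ ($i\in[m]$, $k\ge0$) with $\max_j\gamma_{j,k}=\hat\gamma_k$, nonnegative vectors $u,v\in\mathbb{R}^m$ and $\theta>0$ with $\frac1m\sum_iu_i\gamma_{i,k}v_i\ge\theta\hat\gamma_k$ for all $k\ge0$. Then: (i) $(\lambda_k)$ is a strictly positive decreasing sequence with $\lambda_k\to0$, and $(\hat\gamma_k)$ is a strictly positive decreasing sequence with $\hat\gamma_k\to0$ and $\hat\gamma_k/\lambda_k\to0$; (ii) $\Lambda_k/\lambda_k\to0$, $\Lambda_{k+1}\le\Lambda_k$ for all $k\ge0$, and $\Lambda_{k-1}\le\frac1{k+\Gamma}$ for all $k\ge1$; (iii) for all $k\ge1$, $\dfrac{(k+\Gamma)\hat\gamma_k\lambda_k}{(k+\Gamma-1)\hat\gamma_{k-1}\lambda_{k-1}}\le1+0.5\mu_f\hat\gamma_k\lambda_k\tau$. *)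

From Stdlib Require Export Reals Lra Lia.
Open Scope R_scope.

Definition stepg (gh Gam a : R) (k : nat) : R := gh / Rpower (INR k + Gam) a.
Definition stepl (lam Gam b : R) (k : nat) : R := lam / Rpower (INR k + Gam) b.
Definition bigLam (lam Gam b : R) (k : nat) : R :=
  Rabs (1 - stepl lam Gam b (S k) / stepl lam Gam b k).

(* finite sum over i = 0 .. m-1 (indices of [m] shifted to start at 0) *)
Fixpoint fsum (m : nat) (f : nat -> R) : R :=
  match m with O => 0 | S m' => fsum m' f + f m' end.

(* Every sequence involved has the shape [c / (k + Gam)^e], and quotients and
   products of such sequences keep that shape, so gamma_k / lambda_k and
   Lambda_k / lambda_k are dominated by sequences of this shape with exponents
   a - b > 0 and 1 - b > 0.  With x = k + Gam, lambda_{k+1} / lambda_k equals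
   (x / (x + 1))^b, which lies between x / (x + 1) and 1 since 0 <= b <= 1;
   hence 0 <= Lambda_k <= 1 / (x + 1).  In (iii) the left-hand side is at most
   x / (x - 1) <= 1 + 2 / x because both step sizes decrease, and the lower
   bound on Gam gives x^(1 - a - b) >= 4 / (gh lam muf tau), which is exactly
   2 / x <= muf gamma_k lambda_k tau / 2. *)

From Stdlib Require Import Reals Lra Lia.
Open Scope R_scope.

Lemma Rpower_pos x e : 0 < Rpower x e.
Proof. apply exp_pos. Qed.

Lemma Rpower_1_base e : Rpower 1 e = 1.
Proof. unfold Rpower; rewrite ln_1, Rmult_0_r; apply exp_0. Qed.

Lemma Rpower_le_1 r e : 0 < r <= 1 -> 0 <= e -> Rpower r e <= 1.
Proof. intros Hr He; rewrite <- (Rpower_1_base e); apply Rle_Rpower_l; lra. Qed.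

Lemma Rpower_ge_base r e : 0 < r <= 1 -> e <= 1 -> r <= Rpower r e.
Proof.
  intros Hr He.
  assert (Hln : ln r <= 0).
  { destruct (Rle_lt_or_eq_dec r 1 (proj2 Hr)) as [Hlt | ->].
    - rewrite <- ln_1; left; apply ln_increasing; lra.
    - rewrite ln_1; lra. }
  rewrite <- (exp_ln r) at 1 by lra; unfold Rpower.
  assert (Hexp : ln r <= e * ln r).
  { assert (0 <= (1 - e) * - ln r) by (apply Rmult_le_pos; lra); lra. }
  destruct (Rle_lt_or_eq_dec _ _ Hexp) as [Hlt | Heq].
  - left; apply exp_increasing, Hlt.
  - rewrite <- Heq; apply Rle_refl.
Qed.

Lemma Rpower_le_of_root_le x y p :
  0 < y -> 0 < p -> Rpower y (1 / p) <= x -> y <= Rpower x p.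
Proof.
  intros Hy Hp Hroot.
  replace y with (Rpower (Rpower y (1 / p)) p) at 1.
  - apply Rle_Rpower_l; [lra | split; [apply Rpower_pos | exact Hroot]].
  - rewrite Rpower_mult; replace (1 / p * p) with 1 by (field; lra).
    apply Rpower_1, Hy.
Qed.

Lemma Un_cv_squeeze_0 (u w : nat -> R) :
  (forall n, 0 <= u n <= w n) -> Un_cv w 0 -> Un_cv u 0.
Proof.
  intros Huw Hw eps Heps; destruct (Hw eps Heps) as [N HN]; exists N.
  intros n Hn; specialize (HN n Hn); specialize (Huw n); unfold R_dist in *.
  rewrite Rminus_0_r, Rabs_pos_eq in * by lra; lra.
Qed.

Lemma stepl_pos c Gam e k : 0 < c -> 0 < stepl c Gam e k.
Proof. intros Hc; apply Rdiv_lt_0_compat; [exact Hc | apply Rpower_pos]. Qed.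

Lemma stepl_decreasing c Gam e k :
  0 <= c -> 0 < Gam -> 0 <= e -> stepl c Gam e (S k) <= stepl c Gam e k.
Proof.
  intros Hc HGam He; unfold stepl; rewrite S_INR.
  pose proof (pos_INR k).
  apply Rmult_le_compat_l; [exact Hc |].
  apply Rinv_le_contravar; [apply Rpower_pos |].
  apply Rle_Rpower_l; lra.
Qed.

Lemma stepl_cv0 c Gam e : 0 < e -> Un_cv (stepl c Gam e) 0.
Proof.
  intros He eps Heps.
  assert (Hq : 0 <= Rabs c / eps).
  { apply Rmult_le_pos; [apply Rabs_pos | left; apply Rinv_0_lt_compat, Heps]. }
  set (M := Rabs c / eps + 1).
  assert (HM : 0 < M) by (unfold M; lra).
  destruct (INR_unbounded (Rpower M (1 / e) - Gam)) as [N HN].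
  exists N; intros n Hn.
  assert (HnN : INR N <= INR n) by (apply le_INR; lia).
  set (x := INR n + Gam).
  assert (Hxe : M <= Rpower x e).
  { apply Rpower_le_of_root_le; [exact HM | exact He | unfold x; lra]. }
  pose proof (Rpower_pos x e).
  unfold R_dist, stepl; fold x.
  rewrite Rminus_0_r; unfold Rdiv; rewrite Rabs_mult, Rabs_inv, (Rabs_pos_eq (Rpower x e)) by lra.
  apply (Rmult_lt_reg_r (Rpower x e)); [lra |].
  rewrite Rmult_assoc, Rinv_l, Rmult_1_r by lra.
  unfold M in Hxe.
  assert (Rabs c = eps * (Rabs c / eps)) by (field; lra).
  nra.
Qed.

Lemma stepl_div c c' Gam e e' k :
  c' <> 0 -> stepl c Gam e k / stepl c' Gam e' k = stepl (c / c') Gam (e - e') k.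
Proof.
  intros Hc'; unfold stepl.
  replace e with (e - e' + e') at 1 by ring; rewrite Rpower_plus.
  pose proof (Rpower_pos (INR k + Gam) (e - e')); pose proof (Rpower_pos (INR k + Gam) e').
  field; lra.
Qed.

Lemma stepl_mul c c' Gam e e' k :
  stepl c Gam e k * stepl c' Gam e' k = stepl (c * c') Gam (e + e') k.
Proof.
  unfold stepl; rewrite Rpower_plus.
  pose proof (Rpower_pos (INR k + Gam) e); pose proof (Rpower_pos (INR k + Gam) e').
  field; lra.
Qed.

Lemma stepl_succ_ratio lam Gam b k :
  lam <> 0 -> 0 < Gam ->
  stepl lam Gam b (S k) / stepl lam Gam b k
  = Rpower ((INR k + Gam) / (INR k + Gam + 1)) b.
Proof.
  intros Hlam HGam; unfold stepl; rewrite S_INR.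
  pose proof (pos_INR k).
  replace (INR k + 1 + Gam) with (INR k + Gam + 1) by ring.
  set (x := INR k + Gam).
  replace (Rpower x b) with (Rpower (x / (x + 1)) b * Rpower (x + 1) b).
  - pose proof (Rpower_pos (x / (x + 1)) b); pose proof (Rpower_pos (x + 1) b).
    field; lra.
  - rewrite Rpower_mult_distr by (unfold x; try apply Rdiv_lt_0_compat; lra).
    f_equal; field; unfold x; lra.
Qed.

Lemma ratio_succ_pos_le_1 x : 0 < x -> 0 < x / (x + 1) <= 1.
Proof.
  intros Hx; split; [apply Rdiv_lt_0_compat; lra |].
  apply Rmult_le_reg_r with (x + 1); [lra |].
  unfold Rdiv; rewrite Rmult_assoc, Rinv_l; lra.
Qed.

Lemma bigLam_eq lam Gam b k :
  lam <> 0 -> 0 < Gam -> 0 <= b ->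
  bigLam lam Gam b k = 1 - Rpower ((INR k + Gam) / (INR k + Gam + 1)) b.
Proof.
  intros Hlam HGam Hb; unfold bigLam; rewrite stepl_succ_ratio by assumption.
  assert (Hx : 0 < INR k + Gam) by (pose proof (pos_INR k); lra).
  pose proof (Rpower_le_1 _ b (ratio_succ_pos_le_1 _ Hx) Hb).
  apply Rabs_pos_eq; lra.
Qed.

Lemma bigLam_bounds lam Gam b k :
  lam <> 0 -> 0 < Gam -> 0 <= b <= 1 ->
  0 <= bigLam lam Gam b k <= 1 / (INR k + Gam + 1).
Proof.
  intros Hlam HGam Hb; rewrite bigLam_eq by (assumption || lra).
  pose proof (pos_INR k); set (x := INR k + Gam).
  assert (Hx : 0 < x) by (unfold x; lra).
  pose proof (ratio_succ_pos_le_1 x Hx) as Hr.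
  pose proof (Rpower_le_1 _ b Hr (proj1 Hb)).
  pose proof (Rpower_ge_base _ b Hr (proj2 Hb)).
  replace (1 / (x + 1)) with (1 - x / (x + 1)) by (field; lra).
  lra.
Qed.

Lemma bigLam_decreasing lam Gam b k :
  lam <> 0 -> 0 < Gam -> 0 <= b -> bigLam lam Gam b (S k) <= bigLam lam Gam b k.
Proof.
  intros Hlam HGam Hb; rewrite !bigLam_eq by assumption; rewrite S_INR.
  pose proof (pos_INR k); set (x := INR k + Gam).
  replace (INR k + 1 + Gam) with (x + 1) by (unfold x; ring).
  assert (Hmono : x / (x + 1) <= (x + 1) / (x + 1 + 1)).
  { apply Rmult_le_reg_r with ((x + 1) * (x + 1 + 1)); [unfold x; nra |].
    replace (x / (x + 1) * ((x + 1) * (x + 1 + 1))) with (x * (x + 2)) by (field; unfold x; lra).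
    replace ((x + 1) / (x + 1 + 1) * ((x + 1) * (x + 1 + 1))) with ((x + 1) * (x + 1))
      by (field; unfold x; lra).
    nra. }
  pose proof (ratio_succ_pos_le_1 x ltac:(unfold x; lra)).
  assert (Rpower (x / (x + 1)) b <= Rpower ((x + 1) / (x + 1 + 1)) b)
    by (apply Rle_Rpower_l; lra).
  lra.
Qed.

Lemma bigLam_div_stepl_bounds lam Gam b k :
  0 < lam -> 0 < Gam -> 0 <= b <= 1 ->
  0 <= bigLam lam Gam b k / stepl lam Gam b k <= stepl (1 / lam) Gam (1 - b) k.
Proof.
  intros Hlam HGam Hb.
  pose proof (pos_INR k).
  assert (Hinv : 0 <= / stepl lam Gam b k)
    by (left; apply Rinv_0_lt_compat, stepl_pos, Hlam).
  split; [apply Rmult_le_pos; [apply bigLam_bounds; lra | exact Hinv] |].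
  rewrite <- stepl_div by lra; unfold stepl at 2; rewrite Rpower_1 by lra.
  apply Rmult_le_compat_r; [exact Hinv |].
  apply Rle_trans with (1 / (INR k + Gam + 1)); [apply bigLam_bounds; lra |].
  unfold Rdiv; rewrite !Rmult_1_l; apply Rinv_le_contravar; lra.
Qed.

Lemma shifted_growth_le x p q p' q' :
  2 <= x -> 0 < p' <= p -> 0 < q' <= q ->
  x * p' * q' / ((x - 1) * p * q) <= 1 + 2 / x.
Proof.
  intros Hx Hp Hq.
  assert (Hpq : p' * q' <= p * q) by (apply Rmult_le_compat; lra).
  assert (Hshift : x / (x - 1) <= 1 + 2 / x).
  { apply Rmult_le_reg_r with ((x - 1) * x); [nra |].
    replace (x / (x - 1) * ((x - 1) * x)) with (x * x) by (field; lra).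
    replace ((1 + 2 / x) * ((x - 1) * x)) with (x * x + x - 2) by (field; lra).
    lra. }
  apply Rle_trans with (x / (x - 1)); [| exact Hshift].
  replace (x * p' * q' / ((x - 1) * p * q)) with (x / (x - 1) * (p' * q' / (p * q)))
    by (field; lra).
  rewrite <- (Rmult_1_r (x / (x - 1))) at 2.
  apply Rmult_le_compat_l; [left; apply Rdiv_lt_0_compat; lra |].
  apply Rmult_le_reg_r with (p * q); [nra |].
  replace (p' * q' / (p * q) * (p * q)) with (p' * q') by (field; lra).
  lra.
Qed.

Lemma inv_le_half_step_product gh lam muf tau Gam a b k :
  0 < gh -> 0 < lam -> 0 < muf -> 0 < tau -> 0 < Gam -> a + b < 1 ->
  Rpower (4 / (gh * lam * muf * tau)) (1 / (1 - a - b)) <= Gam ->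
  2 / (INR k + Gam) <= 1 / 2 * muf * stepl gh Gam a k * stepl lam Gam b k * tau.
Proof.
  intros Hgh Hlam Hmuf Htau HGam Hab HGam_root.
  pose proof (pos_INR k); set (x := INR k + Gam).
  set (K := gh * lam * muf * tau).
  assert (HK : 0 < K) by (unfold K; repeat apply Rmult_lt_0_compat; lra).
  assert (HxK : 4 / K <= Rpower x (1 - a - b)).
  { apply Rpower_le_of_root_le; [apply Rdiv_lt_0_compat; lra | lra | unfold x, K; lra]. }
  assert (Hsplit : x = Rpower x (1 - a - b) * Rpower x (a + b)).
  { rewrite <- Rpower_plus; replace (1 - a - b + (a + b)) with 1 by ring.
    rewrite Rpower_1; unfold x; lra. }
  replace (1 / 2 * muf * stepl gh Gam a k * stepl lam Gam b k * tau)
    with (1 / 2 * muf * tau * (stepl gh Gam a k * stepl lam Gam b k)) by ring.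
  rewrite stepl_mul; unfold stepl; fold x.
  set (xc := Rpower x (1 - a - b)) in *; set (xab := Rpower x (a + b)) in *.
  assert (0 < xc) by apply Rpower_pos; assert (0 < xab) by apply Rpower_pos.
  assert (H4 : 4 <= K * xc).
  { apply Rmult_le_compat_l with (r := K) in HxK; [| lra].
    replace (K * (4 / K)) with 4 in HxK by (field; lra); exact HxK. }
  rewrite Hsplit.
  replace (1 / 2 * muf * tau * (gh * lam / xab)) with (K * xc / (2 * xc * xab)) by (unfold K; field; lra).
  replace (2 / (xc * xab)) with (4 / (2 * xc * xab)) by (field; lra).
  apply Rmult_le_compat_r; [left; apply Rinv_0_lt_compat; nra | exact H4].
Qed.

Theorem lemma1 (gh lam Gam a b tau muf : R) (m : nat)
  (gam : nat -> nat -> R) (u v : nat -> R) (theta : R)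
  (Hgh : 0 < gh) (Hlam : 0 < lam) (HGam0 : 0 < Gam) (Ha : 0 < a) (Hb : 0 < b)
  (Htau : 0 < tau) (Hmuf : 0 < muf)
  (Hab : b < a) (Hab1 : a + b < 1) (Hab2 : 2 * a + 3 * b < 2)
  (HGam1 : 1 <= Gam)
  (HGam2 : Rpower (4 / (gh * lam * muf * tau)) (1 / (1 - a - b)) <= Gam)
  (Hgam_nn : forall i k, (i < m)%nat -> 0 <= gam i k)
  (Hgam_max : forall k, (forall j, (j < m)%nat -> gam j k <= stepg gh Gam a k) /\
                        (exists j, (j < m)%nat /\ gam j k = stepg gh Gam a k))
  (Hu : forall i, (i < m)%nat -> 0 <= u i)
  (Hv : forall i, (i < m)%nat -> 0 <= v i)
  (Htheta : 0 < theta)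
  (Hsum : forall k, (1 / INR m) * fsum m (fun i => u i * gam i k * v i)
                    >= theta * stepg gh Gam a k) :
  (* (i) *)
  ((forall k, 0 < stepl lam Gam b k) /\
   (forall k, stepl lam Gam b (S k) <= stepl lam Gam b k) /\
   Un_cv (stepl lam Gam b) 0 /\
   (forall k, 0 < stepg gh Gam a k) /\
   (forall k, stepg gh Gam a (S k) <= stepg gh Gam a k) /\
   Un_cv (stepg gh Gam a) 0 /\
   Un_cv (fun k => stepg gh Gam a k / stepl lam Gam b k) 0) /\
  (* (ii) *)
  (Un_cv (fun k => bigLam lam Gam b k / stepl lam Gam b k) 0 /\
   (forall k, bigLam lam Gam b (S k) <= bigLam lam Gam b k) /\
   (forall k, (1 <= k)%nat -> bigLam lam Gam b (k - 1) <= 1 / (INR k + Gam))) /\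
  (* (iii) *)
  (forall k, (1 <= k)%nat ->
     ((INR k + Gam) * stepg gh Gam a k * stepl lam Gam b k) /
     ((INR k + Gam - 1) * stepg gh Gam a (k - 1) * stepl lam Gam b (k - 1))
     <= 1 + (1 / 2) * muf * stepg gh Gam a k * stepl lam Gam b k * tau).
Proof.
  change stepg with stepl.
  split; [| split].
  - repeat split.
    + intro k; apply stepl_pos, Hlam.
    + intro k; apply stepl_decreasing; lra.
    + apply stepl_cv0, Hb.
    + intro k; apply stepl_pos, Hgh.
    + intro k; apply stepl_decreasing; lra.
    + apply stepl_cv0, Ha.
    + apply Un_cv_squeeze_0 with (stepl (gh / lam) Gam (a - b)); [| apply stepl_cv0; lra].
      intro k; rewrite stepl_div by lra.
      split; [left; apply stepl_pos, Rdiv_lt_0_compat |]; lra.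
  - split; [| split].
    + apply Un_cv_squeeze_0 with (stepl (1 / lam) Gam (1 - b)); [| apply stepl_cv0; lra].
      intro k; apply bigLam_div_stepl_bounds; lra.
    + intro k; apply bigLam_decreasing; lra.
    + intros [| k] Hk; [lia |].
      replace (S k - 1)%nat with k by lia; rewrite S_INR.
      replace (INR k + 1 + Gam) with (INR k + Gam + 1) by ring.
      apply bigLam_bounds; lra.
  - intros [| k] Hk; [lia |].
    replace (S k - 1)%nat with k by lia.
    pose proof (pos_INR k).
    apply Rle_trans with (1 + 2 / (INR (S k) + Gam)).
    + apply shifted_growth_le.
      * rewrite S_INR; lra.
      * split; [apply stepl_pos, Hgh | apply stepl_decreasing; lra].
      * split; [apply stepl_pos, Hlam | apply stepl_decreasing; lra].
    + apply Rplus_le_compat_l, inv_le_half_step_product; lra.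
Qed.
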